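(* Let $n\le d$, let $\{u_i\}_{i=1}^n$ be an orthonormal family in $\mathbb{C}^d$, let $\{e_i\}$ be the standard basis of $\mathbb{C}^n$, and let $K=\sum_{i=1}^n|e_i\rangle\langle u_i\otimes\overline{u_i}|$. If $\rho$ is a separable bipartite PSD matrix on $\mathbb{C}^d\otimes\mathbb{C}^d$ whose range is contained in the symmetric subspace $\mathbb{C}^d\vee\mathbb{C}^d$, then $Z^\Gamma_K(\rho)=K\rho^\Gamma K^*\in\operatorname{R}_1[\mathsf{DNN}_n]$.
   Context: $\rho^\Gamma$ is the partial transpose on the second factor (standard basis), $\overline{u}$ is entrywise complex conjugation. A bipartite PSD $\rho$ is separable if it is a finite sum $\sum_k|v_k\rangle\langle v_k|\otimes|w_k\rangle\langle w_k|$. The symmetric subspace $\mathbb{C}^d\vee\mathbb{C}^d$ is the $+1$ eigenspace of the flip operator $F=\sum_{i,j}|ij\rangle\langle ji|$. $\mathsf{DNN}_n$ is the cone of $n\times n$ PSD matrices with entrywise nonnegative entries, and $\operatorname{R}_1[\mathsf{DNN}_n]$ is the convex cone generated by the rank-1 matrices in $\mathsf{DNN}_n$. *)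

(* Complex numbers: an arbitrary numClosedFieldType C
   (e.g. algC, or complex R for a real closed field R). *)
From HB Require Import structures.
From mathcomp Require Import all_boot all_order all_algebra.
Set Implicit Arguments. Unset Strict Implicit. Unset Printing Implicit Defensive.
Import Order.TTheory GRing.Theory Num.Theory.
Local Open Scope ring_scope.

Section Defs.
Variable C : numClosedFieldType.

(* decoding of a tensor index k of C^d (x) C^d into a pair (i,j);
   inverse of mxvec_index *)
Definition tidx (d : nat) (k : 'I_(d * d)) : 'I_d * 'I_d :=
  enum_val (cast_ord (esym (mxvec_cast d d)) k).

Definition conjmx (m n : nat) (A : 'M[C]_(m, n)) : 'M[C]_(m, n) :=
  map_mx (fun z => z^*) A.
Definition hadj (m n : nat) (A : 'M[C]_(m, n)) : 'M[C]_(n, m) := (conjmx A)^T.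

Definition kronv (d : nat) (u w : 'cV[C]_d) : 'cV[C]_(d * d) :=
  \col_k (u (tidx k).1 0 * w (tidx k).2 0).

(* partial transpose on the second factor *)
Definition ptrans (d : nat) (rho : 'M[C]_(d * d)) : 'M[C]_(d * d) :=
  \matrix_(k, l) rho (mxvec_index (tidx k).1 (tidx l).2)
                     (mxvec_index (tidx l).1 (tidx k).2).

Definition flipmx (d : nat) : 'M[C]_(d * d) :=
  \matrix_(k, l) (((tidx k).1 == (tidx l).2) && ((tidx k).2 == (tidx l).1))%:R.

Definition psdmx (n : nat) (A : 'M[C]_n) : Prop :=
  hadj A = A /\ forall x : 'cV[C]_n, 0 <= (hadj x *m A *m x) 0 0.

Definition separable (d : nat) (rho : 'M[C]_(d * d)) : Prop :=
  exists (m : nat) (v w : 'I_m -> 'cV[C]_d),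
    rho = \sum_(k < m) (kronv (v k) (w k) *m hadj (kronv (v k) (w k))).

(* range of rho contained in the symmetric subspace (+1 eigenspace of F) *)
Definition range_in_sym (d : nat) (rho : 'M[C]_(d * d)) : Prop :=
  forall x : 'cV[C]_(d * d), flipmx d *m (rho *m x) = rho *m x.

Definition DNN (n : nat) (A : 'M[C]_n) : Prop :=
  psdmx A /\ forall i j, 0 <= A i j.

Definition R1DNN (n : nat) (A : 'M[C]_n) : Prop :=
  exists (m : nat) (c : 'I_m -> C) (X : 'I_m -> 'M[C]_n),
    (forall k, 0 <= c k) /\ (forall k, DNN (X k) /\ \rank (X k) = 1%N) /\
    A = \sum_(k < m) c k *: X k.

Definition orthonormal_fam (n d : nat) (u : 'I_n -> 'cV[C]_d) : Prop :=
  forall i j, (hadj (u i) *m u j) 0 0 = (i == j)%:R.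

Definition ebasis (n : nat) (i : 'I_n) : 'cV[C]_n := \col_j (j == i)%:R.

Definition Kmap (n d : nat) (u : 'I_n -> 'cV[C]_d) : 'M[C]_(n, d * d) :=
  \sum_(i < n) (ebasis i *m hadj (kronv (u i) (conjmx (u i)))).

End Defs.

From Pilot Require Import Defs.
From HB Require Import structures.
From mathcomp Require Import all_boot all_order all_algebra.
From mathcomp Require Import ring.
Set Implicit Arguments. Unset Strict Implicit. Unset Printing Implicit Defensive.
Import Order.TTheory GRing.Theory Num.Theory.
Local Open Scope ring_scope.

(* Write rho = sum_k |v_k (x) w_k><v_k (x) w_k|.  Since rho is a sum of
   positive terms and (1 - F) rho (1 - F)^* = 0, every v_k (x) w_k is fixed
   by the flip, i.e. w_k is a multiple mu_k v_k (or v_k = 0).  The partial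
   transpose maps each term to |v_k (x) conj w_k><v_k (x) conj w_k|, and
   K (v (x) conj (mu v)) = conj mu * y with y_i = |<u_i, v>|^2 >= 0, so
   K rho^Gamma K^* = sum_k |mu_k|^2 y_k y_k^* is a nonnegative combination of
   rank-one doubly nonnegative matrices. *)

Lemma tidxK d (i j : 'I_d) : tidx (mxvec_index i j) = (i, j).
Proof. by rewrite /tidx /mxvec_index cast_ordK enum_rankK. Qed.

Lemma sum_tidx (R : nmodType) d (F : 'I_(d * d) -> R) :
  \sum_(k < d * d) F k = \sum_(i < d) \sum_(j < d) F (mxvec_index i j).
Proof.
rewrite pair_big /= (reindex (fun p : 'I_d * 'I_d => mxvec_index p.1 p.2)) //.
exists (fun k => tidx k) => [[i j] _ | k _] /=; first by rewrite tidxK.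
by case/mxvec_indexP: k => i j; rewrite tidxK.
Qed.

Lemma symmetric_product_proportional (F : fieldType) d (v w : 'cV[F]_d) :
  (forall i j, v i 0 * w j 0 = v j 0 * w i 0) ->
  v = 0 \/ exists mu, w = mu *: v.
Proof.
move=> sym; have [-> | /matrix0Pn [i [k vi0]]] := eqVneq v 0; [by left | right].
rewrite (ord1 k) in vi0; exists (w i 0 / v i 0).
apply/matrixP => j l; rewrite (ord1 l) mxE; apply: (mulfI vi0).
by rewrite sym; field.
Qed.

Section Hermitian.
Variable C : numClosedFieldType.

Lemma hadjE m n (A : 'M[C]_(m, n)) i j : hadj A i j = (A j i)^*.
Proof. by rewrite !mxE. Qed.

Lemma hadjM m n p (A : 'M[C]_(m, n)) (B : 'M[C]_(n, p)) :
  hadj (A *m B) = hadj B *m hadj A.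
Proof.
apply/matrixP => i j; rewrite !mxE rmorph_sum.
by apply: eq_bigr => k _; rewrite !mxE rmorphM mulrC.
Qed.

Lemma hadjK m n (A : 'M[C]_(m, n)) : hadj (hadj A) = A.
Proof. by apply/matrixP => i j; rewrite !hadjE conjCK. Qed.

Lemma hadjZ m n (c : C) (A : 'M[C]_(m, n)) : hadj (c *: A) = c^* *: hadj A.
Proof. by apply/matrixP => i j; rewrite !(hadjE, mxE) rmorphM. Qed.

Lemma outerE m (x y : 'cV[C]_m) i j : (x *m hadj y) i j = x i 0 * (y j 0)^*.
Proof. by rewrite mxE big_ord1 hadjE. Qed.

Lemma outer_sum_eq0 N m (z : 'I_m -> 'cV[C]_N) :
  \sum_(k < m) z k *m hadj (z k) = 0 -> forall k, z k = 0.
Proof.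
move=> sum0 k; apply/matrixP => p j; rewrite (ord1 j) mxE.
have /eqP := congr1 (fun M : 'M[C]_N => M p p) sum0; rewrite summxE mxE.
under eq_bigr do rewrite outerE.
move/eqP/psumr_eq0P => /(_ (fun i _ => mul_conjC_ge0 _) k isT) /eqP.
by rewrite mul_conjC_eq0 => /eqP.
Qed.

Lemma kronvE d (v w : 'cV[C]_d) i j :
  kronv v w (mxvec_index i j) 0 = v i 0 * w j 0.
Proof. by rewrite mxE tidxK. Qed.

Lemma kronv0l d (w : 'cV[C]_d) : kronv 0 w = 0.
Proof. by apply/matrixP => k j; rewrite !mxE mul0r. Qed.

Lemma flipmx_mulE d (x : 'cV[C]_(d * d)) i j :
  (flipmx C d *m x) (mxvec_index i j) 0 = x (mxvec_index j i) 0.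
Proof.
rewrite mxE (bigD1 (mxvec_index j i)) //= mxE !tidxK /= !eqxx mul1r big1 ?addr0 //.
move=> q; case/mxvec_indexP: q => k l neq; rewrite mxE !tidxK /=.
suff -> : (i == l) && (j == k) = false by rewrite mul0r.
by apply: contraNF neq => /andP[/eqP <- /eqP <-].
Qed.

Lemma ptrans_sum d m (F : 'I_m -> 'M[C]_(d * d)) :
  ptrans (\sum_(k < m) F k) = \sum_(k < m) ptrans (F k).
Proof.
by apply/matrixP => p q; rewrite !(mxE, summxE); apply: eq_bigr => k _; rewrite mxE.
Qed.

Lemma ptrans_kronv_outer d (v w : 'cV[C]_d) :
  ptrans (kronv v w *m hadj (kronv v w)) =
  kronv v (Defs.conjmx w) *m hadj (kronv v (Defs.conjmx w)).
Proof.
apply/matrixP => p q; case/mxvec_indexP: p => a b; case/mxvec_indexP: q => c e.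
rewrite mxE !tidxK !outerE !kronvE !mxE !rmorphM /= conjCK; ring.
Qed.

Lemma range_in_symP d (rho : 'M[C]_(d * d)) :
  range_in_sym rho -> flipmx C d *m rho = rho.
Proof.
move=> sym; apply/matrixP => p q.
by have /matrixP/(_ p 0) := sym (delta_mx q 0); rewrite mulmxA -!colE !mxE.
Qed.

Lemma range_in_sym_outer_sum_flip d m (z : 'I_m -> 'cV[C]_(d * d)) :
  range_in_sym (\sum_(k < m) z k *m hadj (z k)) ->
  forall k, flipmx C d *m z k = z k.
Proof.
move=> /range_in_symP F_rho; set G := 1%:M - flipmx C d.
suff Gz0 : forall k, G *m z k = 0.
  by move=> k; apply/esym/eqP; rewrite -subr_eq0 -{1}[z k]mul1mx -mulmxBl Gz0.
apply: (outer_sum_eq0 (z := fun k => G *m z k)).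
transitivity (G *m (\sum_(k < m) z k *m hadj (z k)) *m hadj G).
  by rewrite mulmx_sumr mulmx_suml; apply: eq_bigr => k _; rewrite hadjM !mulmxA.
by rewrite mulmxBl mul1mx F_rho subrr mul0mx.
Qed.

Definition cdot d (x y : 'cV[C]_d) : C := (hadj x *m y) 0 0.

Lemma cdotE d (x y : 'cV[C]_d) : cdot x y = \sum_(i < d) (x i 0)^* * y i 0.
Proof. by rewrite /cdot mxE; apply: eq_bigr => i _; rewrite hadjE. Qed.

Lemma conj_cdot d (x y : 'cV[C]_d) : (cdot x y)^* = cdot y x.
Proof.
by rewrite !cdotE rmorph_sum; apply: eq_bigr => i _; rewrite rmorphM /= conjCK mulrC.
Qed.

Lemma cdotZl d (mu : C) (x y : 'cV[C]_d) : cdot (mu *: x) y = mu^* * cdot x y.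
Proof.
by rewrite !cdotE big_distrr; apply: eq_bigr => i _; rewrite !mxE rmorphM -mulrA.
Qed.

Lemma cdot_conjmx d (x y : 'cV[C]_d) :
  cdot (Defs.conjmx x) (Defs.conjmx y) = cdot y x.
Proof. by rewrite !cdotE; apply: eq_bigr => i _; rewrite !mxE conjCK mulrC. Qed.

Lemma cdot_kronv d (x y v w : 'cV[C]_d) :
  cdot (kronv x y) (kronv v w) = cdot x v * cdot y w.
Proof.
rewrite !cdotE sum_tidx big_distrlr /=; apply: eq_bigr => i _.
by apply: eq_bigr => j _; rewrite !kronvE rmorphM; ring.
Qed.

Lemma Kmap_mulE n d (u : 'I_n -> 'cV[C]_d) (x : 'cV[C]_(d * d)) i :
  (Kmap u *m x) i 0 = cdot (kronv (u i) (Defs.conjmx (u i))) x.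
Proof.
rewrite /Kmap mulmx_suml summxE (bigD1 i) //= -mulmxA mxE big_ord1 mxE eqxx mul1r.
rewrite big1 ?addr0 // => j nj.
by rewrite -mulmxA mxE big_ord1 mxE eq_sym (negbTE nj) mul0r.
Qed.

End Hermitian.

Section Cone.
Variables (C : numClosedFieldType) (n : nat).

Lemma psdmx_outer (y : 'cV[C]_n) : psdmx (y *m hadj y).
Proof.
split=> [|x]; first by rewrite hadjM hadjK.
have -> : hadj x *m (y *m hadj y) *m x = (hadj x *m y) *m hadj (hadj x *m y).
  by rewrite hadjM hadjK !mulmxA.
by rewrite outerE mul_conjC_ge0.
Qed.

Lemma rank_outer (y : 'cV[C]_n) : y != 0 -> \rank (y *m hadj y) = 1%N.
Proof.
move=> /matrix0Pn [i [j yi0]]; rewrite (ord1 j) in yi0; apply/eqP.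
rewrite eqn_leq (leq_trans (mxrankM_maxl _ _) (rank_leq_col _)) lt0n mxrank_eq0.
by apply/matrix0Pn; exists i, i; rewrite outerE mul_conjC_eq0.
Qed.

Lemma R1DNN0 : R1DNN (0 : 'M[C]_n).
Proof.
by exists 0%N, (fun=> 0), (fun=> 0); split; [case | split; [case | rewrite big_ord0]].
Qed.

Lemma R1DNND (A B : 'M[C]_n) : R1DNN A -> R1DNN B -> R1DNN (A + B).
Proof.
move=> [m1 [c1 [X1 [c1_ge0 [X1_r1 ->]]]]] [m2 [c2 [X2 [c2_ge0 [X2_r1 ->]]]]].
exists (m1 + m2)%N, (fun k => match split k with inl i => c1 i | inr j => c2 j end),
  (fun k => match split k with inl i => X1 i | inr j => X2 j end).
split; first by move=> k; case: split.
split; first by move=> k; case: split.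
rewrite big_split_ord; congr (_ + _); apply: eq_bigr => k _.
  by rewrite (unsplitK (inl k)).
by rewrite (unsplitK (inr k)).
Qed.

Lemma R1DNN_outer (c : C) (y : 'cV[C]_n) :
  0 <= c -> (forall i, 0 <= y i 0) -> R1DNN (c *: (y *m hadj y)).
Proof.
move=> c_ge0 y_ge0; have [-> | y0] := eqVneq y 0.
  by rewrite mul0mx scaler0; exact: R1DNN0.
exists 1%N, (fun=> c), (fun=> y *m hadj y); split=> //; split; last by rewrite big_ord1.
move=> _; split; last exact: rank_outer.
split=> [|i j]; first exact: psdmx_outer.
by rewrite outerE geC0_conj ?mulr_ge0.
Qed.

End Cone.

Section Compression.
Variables (C : numClosedFieldType) (n d : nat) (u : 'I_n -> 'cV[C]_d).

Definition overlap_sq (v : 'cV[C]_d) : 'cV[C]_n := \col_i (cdot (u i) v * cdot v (u i)).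

Lemma overlap_sq_ge0 v i : 0 <= overlap_sq v i 0.
Proof. by rewrite mxE -conj_cdot mulrC mul_conjC_ge0. Qed.

Lemma Kmap_kronv_conj v w i :
  (Kmap u *m kronv v (Defs.conjmx w)) i 0 = cdot (u i) v * cdot w (u i).
Proof. by rewrite Kmap_mulE cdot_kronv cdot_conjmx. Qed.

Lemma R1DNN_Kmap_ptrans_symmetric_product (v w : 'cV[C]_d) :
  (forall i j, v i 0 * w j 0 = v j 0 * w i 0) ->
  R1DNN (Kmap u *m ptrans (kronv v w *m hadj (kronv v w)) *m hadj (Kmap u)).
Proof.
rewrite ptrans_kronv_outer !mulmxA -mulmxA -hadjM.
case/symmetric_product_proportional => [-> | [mu ->]].
  by rewrite kronv0l mulmx0 mul0mx; exact: R1DNN0.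
have -> : Kmap u *m kronv v (Defs.conjmx (mu *: v)) = mu^* *: overlap_sq v.
  by apply/matrixP => i j; rewrite (ord1 j) Kmap_kronv_conj cdotZl !mxE mulrCA.
rewrite hadjZ -scalemxAl -scalemxAr scalerA.
by apply: R1DNN_outer => [|i]; [rewrite conjCK mulrC mul_conjC_ge0 | exact: overlap_sq_ge0].
Qed.

End Compression.

Theorem mainTheorem12 (C : numClosedFieldType) (n d : nat)
  (u : 'I_n -> 'cV[C]_d) (rho : 'M[C]_(d * d)) :
  (n <= d)%N ->
  orthonormal_fam u ->
  psdmx rho ->
  separable rho ->
  range_in_sym rho ->
  R1DNN (Kmap u *m ptrans rho *m hadj (Kmap u)).
Proof.
move=> _ _ _ [m [v [w ->]]] /range_in_sym_outer_sum_flip flip_fixed.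
rewrite ptrans_sum mulmx_sumr mulmx_suml.
apply: (big_ind (@R1DNN C n) (R1DNN0 C n) (@R1DNND C n)) => k _.
apply: R1DNN_Kmap_ptrans_symmetric_product => i j.
by have /matrixP/(_ (mxvec_index j i) 0) := flip_fixed k; rewrite flipmx_mulE !kronvE.
Qed.
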